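(* Fix $l,r>0$, $0<\alpha<\beta<1$ and $Q_0\in\mathbb{R}$. Let $A^*\in(0,A_M)$ be the point with $B(A^* )=A^*$ and set $B^*=B(A^* )$; let $\hat A\in(0,A_M)$ be the point with $N(\hat A)=0$ and set $\hat B=B(\hat A)$. Then: (i) if $l<r$ then $l<\hat A<A^*=B^*<\hat B<r$; (ii) if $l>r$ then $l>\hat A>A^*=B^*>\hat B>r$; (iii) if $l=r$ then $\hat A=\hat B=A^*=B^*=l=r$.
   Context: For $A\in(0,A_M)$, where $A_M=l+\frac{\alpha}{1-\beta}r$, define $B=B(A)=\frac{1-\beta}{\alpha}(l-A)+r$ (so $B>0$ on this interval), $S_a=\sqrt{Q_0^2+A^2}$, $S_b=\sqrt{Q_0^2+B^2}$ and $N=N(A)=A-l+S_a-S_b$. (Here $A,B$ represent geometric means of the two ion concentrations at the points $x=a$ and $x=b$ in a zero-current Poisson–Nernst–Planck model with boundary concentrations $l,r$, permanent charge $2Q_0$ on $(a,b)$, and $\alpha=H(a)/H(1)$, $\beta=H(b)/H(1)$, $H(x)=\int_0^x ds/h(s)$.) The function $B(A)-A$ is strictly decreasing, positive near $0^+$ and negative near $A_M^-$, so $A^*$ exists uniquely; $N$ is strictly increasing in $A$ with $N(0^+)<0<N(A_M^-)$, so $\hat A$ exists uniquely. *)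

From Stdlib Require Import Reals Lra.
Open Scope R_scope.

Definition A_M (l r alpha beta : R) : R := l + alpha / (1 - beta) * r.

Definition Bfun (l r alpha beta : R) (A : R) : R :=
  (1 - beta) / alpha * (l - A) + r.

Definition Nfun (l r alpha beta Q0 : R) (A : R) : R :=
  A - l + sqrt (Q0 ^ 2 + A ^ 2) - sqrt (Q0 ^ 2 + (Bfun l r alpha beta A) ^ 2).

From Stdlib Require Import Reals Lra Psatz.
Open Scope R_scope.

(* Each of Ahat and Astar lies strictly between two points or coincides with them,
   because its position relative to one point has the same sign as its position
   relative to the other.  For Astar the two points
   are l and r, since Astar - r = k (l - Astar) with k = (1-beta)/alpha > 0.  For
   Ahat they are l and Astar: N(Ahat) = 0 means Ahat - l = S_b - S_a, which has the
   sign of Bhat - Ahat, and B(A) - A is decreasing with root Astar.  Since B is a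
   decreasing map with B(l) = r and B(Astar) = Astar, the order of Ahat, Astar, l is
   then reflected in the order of Bhat, Bstar, r. *)

Lemma between_of_same_side (p x q : R) :
  (p < x <-> x < q) -> (x < p <-> q < x) ->
  (p < q -> p < x < q) /\ (q < p -> q < x < p) /\ (p = q -> x = p).
Proof.
  intros [Hpx Hxq] [Hxp Hqx].
  destruct (Rtotal_order x p) as [Hlt | [_ | Hgt]]; repeat split; intros;
    try specialize (Hxp Hlt); try specialize (Hpx Hgt); lra.
Qed.

Lemma strict_decreasing_lt_iff (f : R -> R) :
  strict_decreasing f -> forall x y, x < y <-> f y < f x.
Proof.
  intros Hf x y; split; [apply Hf |].
  intro Hfyx; destruct (Rtotal_order x y) as [Hlt | [Heq | Hgt]].
  - exact Hlt.
  - subst; lra.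
  - specialize (Hf _ _ Hgt); lra.
Qed.

Lemma sqrt_sum_sq_lt_iff (Q x y : R) :
  0 <= x -> 0 <= y -> sqrt (Q ^ 2 + x ^ 2) < sqrt (Q ^ 2 + y ^ 2) <-> x < y.
Proof.
  intros Hx Hy; split; intro H.
  - apply sqrt_lt_0 in H; nra.
  - apply sqrt_lt_1; nra.
Qed.

Section LinearMap.

Variables l r alpha beta : R.
Hypothesis alpha_pos : 0 < alpha.
Hypothesis beta_lt_1 : beta < 1.

Local Notation B := (Bfun l r alpha beta).

Let slope_pos : 0 < (1 - beta) / alpha.
Proof. apply Rdiv_lt_0_compat; lra. Qed.

Lemma Bfun_strict_decreasing : strict_decreasing B.
Proof. intros x y Hxy; unfold Bfun; nra. Qed.

Lemma Bfun_l : B l = r.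
Proof. unfold Bfun; ring. Qed.

Lemma Bfun_pos (A : R) : A < A_M l r alpha beta -> 0 < B A.
Proof.
  unfold A_M, Bfun; intro HA.
  replace ((1 - beta) / alpha * (l - A) + r)
    with ((1 - beta) / alpha * (l + alpha / (1 - beta) * r - A))
    by (field; lra).
  apply Rmult_lt_0_compat; lra.
Qed.

Lemma Bfun_lt_r_iff (A : R) : (B A < r <-> l < A) /\ (r < B A <-> A < l).
Proof.
  pose proof (strict_decreasing_lt_iff _ Bfun_strict_decreasing l A) as Hl_A.
  pose proof (strict_decreasing_lt_iff _ Bfun_strict_decreasing A l) as HA_l.
  rewrite Bfun_l in Hl_A, HA_l; tauto.
Qed.

Lemma Bfun_fixed_point_sign (a : R) : B a = a ->
  (l < a <-> a < r) /\ (a < l <-> r < a).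
Proof. intro Ha; pose proof (Bfun_lt_r_iff a) as Hr; rewrite Ha in Hr; tauto. Qed.

Lemma lt_Bfun_iff (a x : R) : B a = a ->
  (x < B x <-> x < a) /\ (B x < x <-> a < x).
Proof.
  intro Ha.
  assert (Hdec : strict_decreasing (fun y => B y - y)).
  { intros y z Hyz; pose proof (Bfun_strict_decreasing y z Hyz); lra. }
  pose proof (strict_decreasing_lt_iff _ Hdec x a) as Hxa.
  pose proof (strict_decreasing_lt_iff _ Hdec a x) as Hax.
  cbv beta in Hxa, Hax; rewrite Ha in Hxa, Hax.
  split; [rewrite Hxa | rewrite Hax]; lra.
Qed.

Lemma Nfun_root_sign (Q0 A : R) :
  0 <= A -> 0 <= B A -> Nfun l r alpha beta Q0 A = 0 ->
  (l < A <-> A < B A) /\ (A < l <-> B A < A).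
Proof.
  unfold Nfun; intros HA HB HN.
  rewrite <- (sqrt_sum_sq_lt_iff Q0 _ _ HA HB), <- (sqrt_sum_sq_lt_iff Q0 _ _ HB HA).
  split; lra.
Qed.

End LinearMap.

Theorem lemma3p10 (l r alpha beta Q0 Astar Ahat : R) :
  0 < l -> 0 < r -> 0 < alpha -> alpha < beta -> beta < 1 ->
  0 < Astar < A_M l r alpha beta -> Bfun l r alpha beta Astar = Astar ->
  0 < Ahat < A_M l r alpha beta -> Nfun l r alpha beta Q0 Ahat = 0 ->
  let Bstar := Bfun l r alpha beta Astar in
  let Bhat := Bfun l r alpha beta Ahat in
  (l < r -> l < Ahat /\ Ahat < Astar /\ Astar = Bstar /\ Bstar < Bhat /\ Bhat < r) /\
  (l > r -> l > Ahat /\ Ahat > Astar /\ Astar = Bstar /\ Bstar > Bhat /\ Bhat > r) /\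
  (l = r -> Ahat = Bhat /\ Bhat = Astar /\ Astar = Bstar /\ Bstar = l /\ l = r).
Proof.
  intros _ _ Halpha _ Hbeta _ Hstar [Hhat_pos Hhat_lt] Hhat Bstar Bhat.
  pose proof (Bfun_pos _ _ _ _ Halpha Hbeta _ Hhat_lt) as HBhat_pos.
  destruct (Nfun_root_sign _ _ _ _ Q0 _ (Rlt_le _ _ Hhat_pos) (Rlt_le _ _ HBhat_pos) Hhat)
    as [Hl_hat Hhat_l].
  destruct (lt_Bfun_iff _ _ _ _ Halpha Hbeta _ Ahat Hstar) as [Hhat_star Hstar_hat].
  destruct (between_of_same_side l Ahat Astar
              (iff_trans Hl_hat Hhat_star) (iff_trans Hhat_l Hstar_hat))
    as (Hhat_lt_star & Hhat_gt_star & Hhat_eq_star).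
  destruct (Bfun_fixed_point_sign _ _ _ _ Halpha Hbeta _ Hstar) as [Hl_star Hstar_l].
  destruct (between_of_same_side l Astar r Hl_star Hstar_l)
    as (Hstar_lt & Hstar_gt & Hstar_eq).
  destruct (Bfun_lt_r_iff l r _ _ Halpha Hbeta Ahat) as [Hhat_r Hr_hat].
  pose proof (strict_decreasing_lt_iff _ (Bfun_strict_decreasing l r _ _ Halpha Hbeta))
    as Hdec.
  pose proof (Hdec Ahat Astar) as Hhat_star_B; pose proof (Hdec Astar Ahat) as Hstar_hat_B.
  unfold Bstar, Bhat; rewrite Hstar in *.
  repeat split; intros; lra.
Qed.
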